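(* Let $(A,\gamma)$ be a divided power algebra over a field $\mathbb F$. For ${\underline r}\in\mathrm{Comp}_p(n)$ and $h\in\mathscr C_{\underline r}$ set $\phi_{h,{\underline r}}(a_1,\dots,a_p)=\prod_{i=1}^p\gamma_{r_i}(a_i)$, the product taken in the commutative algebra $A$ and factors with $r_i=0$ omitted. Then $(A,\phi)$ is a step algebra (i.e. a $\Gamma(Lev)$-algebra, induced via the operad morphism $Lev\to Com$).
   Context: A divided power algebra is an associative commutative $\mathbb F$-algebra $A$ with maps $\gamma_n:A\to A$, $n\in\mathbb N$, such that (C1) $\gamma_n(\lambda a)=\lambda^n\gamma_n(a)$; (C2) $\gamma_m(a)\gamma_n(a)=\binom{m+n}{m}\gamma_{m+n}(a)$; (C3) $\gamma_n(a+b)=\gamma_n(a)+\sum_{l=1}^{n-1}\gamma_l(a)\gamma_{n-l}(b)+\gamma_n(b)$; (C4) $\gamma_1(a)=a$; (C5) $\gamma_n(ab)=n!\gamma_n(a)\gamma_n(b)=a^n\gamma_n(b)=\gamma_n(a)b^n$; (C6) $\gamma_m(\gamma_n(a))=\frac{(mn)!}{m!(n!)^m}\gamma_{mn}(a)$. $[n]=\{1,\dots,n\}$. $\mathscr L'(n)$ ($n\ge1$): maps $h:[n]\to\mathbb N$ with $\sum_i2^{-h(i)}=1$, $\sigma\cdot h=h\circ\sigma^{-1}$, unit $1\mapsto0$ in $\mathscr L'(1)$, full composition $\mu(h\otimes g_1\otimes\dots\otimes g_n)$ sending $m_1+\dots+m_{j-1}+t$ to $h(j)+g_j(t)$; $Lev$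 is the linear operad spanned by it. Compositions ${\underline r}\in\mathrm{Comp}_p(n)$ (nonnegative, sum $n$) are identified with partitions of $[n]$ into consecutive intervals ${\underline r}_i$; $\mathscr C_R$ is the set of $h\in\mathscr L'(n)$ constant on the parts of an ordered partition $R$. For $\rho\in\Sigma_p$: ${\underline r}^\rho=(r_{\rho^{-1}(i)})_i$, $\rho^*$ the associated block permutation. ${\underline r}\circ_1(l,m)=(l,m,r_2,\dots,r_p)$. $\gamma_k(Q)=(\bigsqcup_{t=0}^{k-1}(Q_j+tm))_j$; $R\otimes Q=(R_1,\dots,R_p,Q_1+n,\dots)$; ${\underline r}\diamond({\underline q}_i)_i=\gamma_{r_1}({\underline q}_1)\otimes\dots\otimes\gamma_{r_p}({\underline q}_p)$. A step algebra $(A,\phi)$: operations $\phi_{h,{\underline r}}:A^{\times p}\to A$ for $h\in\mathscr C_{\underline r}$ (with $\phi_{h,R}:=\phi_{\tau\cdot h,{\underline r}}$ when $\tau(R_i)={\underline r}_i$) satisfying (S1) $\phi_{\rho^*\cdot h,{\underline r}^\rho}(a_{\rho^{-1}(1)},\dots,a_{\rho^{-1}(p)})=\phi_{h,{\underline r}}(a_1,\dots,a_p)$; (S2) $\phi_{h,(0,{\underline r})}(a_0,a_1,\dots)=\phi_{h,{\underline r}}(a_1,\dots)$; (S3) $\phi_{h,{\underline r}}(\lambda a_1,\dots)=\lambda^{r_1}\phi_{h,{\underline r}}(a_1,\dots)$; (S4) $\binom{r_1}{l}\phi_{h,{\underline r}}(a_1,\dots,a_p)=\phi_{h,{\underline r}\circ_1(l,m)}(a_1,a_1,a_2,\dots,a_p)$;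 (S5) $\phi_{h,{\underline r}}(a+b,a_2,\dots)=\sum_{l+m=r_1}\phi_{h,{\underline r}\circ_1(l,m)}(a,b,a_2,\dots)$; (S6) $\phi_{1,(1)}(a)=a$; (S7) $\phi_{h,{\underline r}}((\phi_{g_i,{\underline q}_i}(a_{ij})_j)_i)=\big(\prod_i\frac{1}{r_i!}\prod_j\frac{(r_iq_{ij})!}{(q_{ij}!)^{r_i}}\big)\phi_{\mu(h\otimes g_1^{\otimes r_1}\otimes\dots\otimes g_p^{\otimes r_p}),{\underline r}\diamond({\underline q}_i)_i}((a_{ij})_{i,j})$ for ${\underline q}_i\in\mathrm{Comp}_{k_i}(m_i)$, $g_i\in\mathscr C_{{\underline q}_i}$. *)

From HB Require Import structures.
From mathcomp Require Import all_boot all_order all_algebra.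
Set Implicit Arguments. Unset Strict Implicit. Unset Printing Implicit Defensive.
Import Order.TTheory GRing.Theory Num.Theory.
Local Open Scope ring_scope.

(* h : [n] -> N is encoded as the list (h 0, ..., h (n-1)). *)
Definition Lprime (n : nat) (h : seq nat) : Prop :=
  size h = n /\ \sum_(x <- h) ((2%:R : rat)^-1) ^+ x = 1.

(* a composition r = (r_1,..,r_p) of n is a seq nat with size p and sumn n;
   its i-th interval (0-based) is {r_0+..+r_{i-1}, ..., r_0+..+r_i - 1}. *)
Definition ivs (r : seq nat) : seq (seq nat) :=
  [seq iota (sumn (take i r)) (nth 0%N r i) | i <- iota 0 (size r)].

(* ordered partitions are lists of blocks *)
Definition constant_on (R : seq (seq nat)) (h : seq nat) : Prop :=
  forall B, B \in R -> forall x y, x \in B -> y \in B -> nth 0%N h x = nth 0%N h y.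

Definition C_ (r : seq nat) (h : seq nat) : Prop :=
  Lprime (sumn r) h /\ constant_on (ivs r) h.

(* tau . h = h o tau^-1 where tau^-1 lists the blocks of R one after another,
   so that tau(R_i) = i-th interval of (|R_1|,..,|R_p|). *)
Definition transport (h : seq nat) (R : seq (seq nat)) : seq nat :=
  map (nth 0%N h) (flatten R).

(* gamma_k(Q) for the partition of [m] into the intervals of q, m = sumn q *)
Definition gamma_part (k : nat) (q : seq nat) : seq (seq nat) :=
  [seq flatten [seq map (addn (t * sumn q)%N) B | t <- iota 0 k] | B <- ivs q].

Definition tensor (R Q : seq (seq nat)) : seq (seq nat) :=
  R ++ map (map (addn (sumn (map size R)))) Q.

Definition diamond (r : seq nat) (qs : seq (seq nat)) : seq (seq nat) :=
  foldl tensor [::] [seq gamma_part pr.1 pr.2 | pr <- zip r qs].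

(* full operadic composition mu(h (x) g_1 (x) ... (x) g_n) in L' *)
Definition mu (h : seq nat) (gs : seq (seq nat)) : seq nat :=
  flatten [seq map (addn pr.1) pr.2 | pr <- zip h gs].

Definition s7coef (r : seq nat) (qs : seq (seq nat)) : nat :=
  (\prod_(pr <- zip r qs)
     ((\prod_(q <- pr.2) (pr.1 * q)`!) %/ (pr.1`! * \prod_(q <- pr.2) (q`! ^ pr.1))))%N.

Section Alg.
Variable F : fieldType.
Variable A : lmodType F.

(* associative commutative (not necessarily unital) F-algebra structure on A *)
Definition comm_assoc_alg (mul : A -> A -> A) : Prop :=
  [/\ forall a b c, mul (mul a b) c = mul a (mul b c),
      forall a b, mul a b = mul b a,
      forall a b c, mul (a + b) c = mul a c + mul b c &
      forall (l : F) a b, mul (l *: a) b = l *: mul a b].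

(* n-th power a^n = a * ... * a (n >= 1 factors) *)
Definition npow (mul : A -> A -> A) (a : A) (n : nat) : A := iter n.-1 (mul a) a.

(* divided power structure; gamma_n is only constrained for n >= 1 *)
Definition divided_power_alg (mul : A -> A -> A) (gam : nat -> A -> A) : Prop :=
  [/\ forall n (l : F) a, (0 < n)%N -> gam n (l *: a) = l ^+ n *: gam n a,
      forall m n a, (0 < m)%N -> (0 < n)%N ->
                 mul (gam m a) (gam n a) = gam (m + n)%N a *+ 'C(m + n, m),
      forall n a b, (0 < n)%N ->
                 gam n (a + b) = gam n a + \sum_(1 <= l < n) mul (gam l a) (gam (n - l)%N b)
                                 + gam n b,
      forall a, gam 1%N a = a &
      (forall n a b, (0 < n)%N ->
                 [/\ gam n (mul a b) = mul (gam n a) (gam n b) *+ n`!,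
                     gam n (mul a b) = mul (npow mul a n) (gam n b) &
                     gam n (mul a b) = mul (gam n a) (npow mul b n)]) /\
      forall m n a, (0 < m)%N -> (0 < n)%N ->
                 gam m (gam n a) = gam (m * n)%N a *+ ((m * n)`! %/ (m`! * n`! ^ m))%N].

(* step algebra: phi h r xs stands for phi_{h,r}(xs) *)
Definition step_algebra (phi : seq nat -> seq nat -> seq A -> A) : Prop :=
  [/\ (* S1 ; s = (rho^-1(1),...,rho^-1(p)) *)
      forall r h s xs, C_ r h -> size xs = size r -> perm_eq s (iota 0 (size r)) ->
        phi (map (nth 0%N h) (flatten [seq nth [::] (ivs r) i | i <- s]))
            [seq nth 0%N r i | i <- s] [seq nth 0 xs i | i <- s] = phi h r xs,
      forall r h a0 xs, C_ (0%N :: r) h -> size xs = size r ->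
        phi h (0%N :: r) (a0 :: xs) = phi h r xs,
      forall r1 r h (l : F) a xs, C_ (r1 :: r) h -> size xs = size r ->
        phi h (r1 :: r) (l *: a :: xs) = l ^+ r1 *: phi h (r1 :: r) (a :: xs),
      forall r1 r l m h a xs, (l + m)%N = r1 -> C_ (r1 :: r) h -> size xs = size r ->
        phi h (r1 :: r) (a :: xs) *+ 'C(r1, l) = phi h (l :: m :: r) (a :: a :: xs) &
      (forall r1 r h a b xs, C_ (r1 :: r) h -> size xs = size r ->
        phi h (r1 :: r) (a + b :: xs) = \sum_(l < r1.+1) phi h (val l :: (r1 - l)%N :: r) (a :: b :: xs)) /\
      (forall a, phi [:: 0%N] [:: 1%N] [:: a] = a) /\
      forall r h qs gs xss, C_ r h ->
        size qs = size r -> size gs = size r -> size xss = size r ->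
        (forall i, (i < size r)%N ->
            C_ (nth [::] qs i) (nth [::] gs i) /\ size (nth [::] xss i) = size (nth [::] qs i)) ->
        phi h r [seq phi (nth [::] gs i) (nth [::] qs i) (nth [::] xss i) | i <- iota 0 (size r)]
        = (let R := diamond r qs in
           let g := mu h (flatten [seq nseq (nth 0%N r i) (nth [::] gs i) | i <- iota 0 (size r)]) in
           phi (transport g R) (map size R) (flatten xss)) *+ s7coef r qs].

(* non-unital product of a list (0 for the empty list, which never occurs for n >= 1) *)
Definition nprod (mul : A -> A -> A) (s : seq A) : A :=
  if s is x :: s' then foldl mul x s' else 0.

Definition phi_gamma (mul : A -> A -> A) (gam : nat -> A -> A) (r : seq nat) (xs : seq A) : A :=
  nprod mul [seq gam pr.1 pr.2 | pr <- zip r xs & pr.1 != 0%N].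

End Alg.

(* Proof: phi_{h,r} does not depend on h, so S1-S6 are the permutation invariance of a
   commutative product together with C1-C4.  For S7, C5 and C6 give, for k factors with
   q_j > 0,
     gamma_r (prod_j gamma_{q_j}(x_j))
       = r!^(k-1) prod_j (r q_j)!/(r! q_j!^r) gamma_{r q_j}(x_j)
       = (prod_j (r q_j)!) / (r! prod_j q_j!^r) prod_j gamma_{r q_j}(x_j),
   while the blocks of r <> (q_i)_i have sizes r_i q_ij; hence both sides of S7 are the same
   product of the gamma_{r_i q_ij}(x_ij), with the same coefficient. *)

From mathcomp Require Import all_boot all_algebra ring.
Set Implicit Arguments. Unset Strict Implicit. Unset Printing Implicit Defensive.
Import GRing.Theory.

Lemma zip_nth_iota (S T : Type) (x0 : S) (y0 : T) s t : size s = size t ->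
  zip s t = [seq (nth x0 s i, nth y0 t i) | i <- iota 0 (size s)].
Proof.
move=> st; rewrite -[zip s t](mkseq_nth (x0, y0)) size_zip st minnn.
by apply: eq_map => i; rewrite nth_zip.
Qed.

Lemma zip_mapl (S S' T : Type) (f : S -> S') s (t : seq T) :
  zip (map f s) t = [seq (f pr.1, pr.2) | pr <- zip s t].
Proof. by elim: s t => [|x s IHs] [|y t] //=; rewrite IHs. Qed.

Lemma zip_flatten (S T : Type) (ss : seq (seq S)) (ts : seq (seq T)) :
  map size ss = map size ts ->
  zip (flatten ss) (flatten ts) = flatten [seq zip pr.1 pr.2 | pr <- zip ss ts].
Proof. by elim: ss ts => [|s ss IHss] [|t ts] //= [st /IHss <-]; rewrite zip_cat. Qed.

Lemma has_zip1 (S T : Type) (p : pred S) (s : seq S) (t : seq T) :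
  size s <= size t -> has (fun pr => p pr.1) (zip s t) = has p s.
Proof. by move=> st; rewrite -[in RHS](unzip1_zip st) /unzip1 has_map. Qed.

Lemma size_gamma_part k q : map size (gamma_part k q) = map (muln k) q.
Proof.
rewrite /gamma_part /ivs -map_comp -[in RHS](mkseq_nth 0 q) /mkseq -!map_comp.
by apply: eq_map => i /=; rewrite size_allpairs !size_iota.
Qed.

Lemma size_foldl_tensor Qs R :
  map size (foldl tensor R Qs) = map size R ++ flatten (map (map size) Qs).
Proof.
elim: Qs R => [|Q Qs IHQs] R /=; first by rewrite cats0.
rewrite IHQs /tensor map_cat -catA -map_comp.
by congr (_ ++ (_ ++ _)); apply: eq_map => B /=; rewrite size_map.
Qed.

Lemma size_diamond r qs : size qs = size r ->
  map size (diamond r qs) =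
  flatten [seq map (muln (nth 0 r i)) (nth [::] qs i) | i <- iota 0 (size r)].
Proof.
move=> sz_qs; rewrite /diamond size_foldl_tensor (zip_nth_iota 0 [::] (esym sz_qs)).
by rewrite -!map_comp; congr flatten; apply: eq_map => i /=; rewrite size_gamma_part.
Qed.

Lemma C_has_nonzero q g : C_ q g -> has (fun i => i != 0) q.
Proof.
case=> -[sz_g sum_g] _; apply: contraLR isT => /hasPn q0.
have /size0nil g_nil : size g = 0.
  by rewrite sz_g sumnE big1_seq // => i /andP[_ /q0/negPn/eqP].
by move: sum_g; rewrite g_nil big_nil => /esym/eqP; rewrite oner_eq0.
Qed.

Definition gamma_comp_coef (m n : nat) : nat := ((m * n)`! %/ (m`! * n`! ^ m))%N.

Definition gamma_prod_coef (r : nat) (qs : seq nat) : nat :=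
  (r`! ^ (count (fun q => q != 0) qs).-1 * \prod_(q <- qs | q != 0) gamma_comp_coef r q)%N.

Lemma fact_mul_dvd r q : (r`! * q.+1`! ^ r %| (r * q.+1)`!)%N.
Proof.
elim: r => [|r IHr]; first by rewrite mul0n.
set n := (r.+1 * q.+1)%N.
have n_sub : (n - q.+1 = r * q.+1)%N by rewrite /n mulSn addKn.
have binE : 'C(n, q.+1) = (r.+1 * 'C(n.-1, q))%N.
  apply/eqP; rewrite -(eqn_pmul2l (ltn0Sn q)) -mul_bin_diag /n; apply/eqP; ring.
rewrite -(bin_fact (leq_pmull q.+1 (ltn0Sn r))) binE n_sub factS expnS.
have -> : (r.+1 * 'C(n.-1, q) * (q.+1`! * (r * q.+1)`!) =
           r.+1 * q.+1`! * ('C(n.-1, q) * (r * q.+1)`!))%N by ring.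
have -> : (r.+1 * r`! * (q.+1`! * q.+1`! ^ r) = r.+1 * q.+1`! * (r`! * q.+1`! ^ r))%N by ring.
by rewrite dvdn_pmul2l ?muln_gt0 ?fact_gt0 // dvdn_mull.
Qed.

Lemma gamma_prod_coef0 qs : gamma_prod_coef 0 qs = 1%N.
Proof.
by rewrite /gamma_prod_coef fact0 exp1n mul1n big1 // => q _; rewrite /gamma_comp_coef mul0n.
Qed.

Lemma gamma_prod_coefE r qs : has (fun q => q != 0) qs ->
  gamma_prod_coef r qs = ((\prod_(q <- qs) (r * q)`!) %/ (r`! * \prod_(q <- qs) q`! ^ r))%N.
Proof.
rewrite has_count => qs_nz.
rewrite -!(big_rmcond _ _ (P := fun q => q != 0)) => [|q /negPn/eqP ->|q /negPn/eqP ->];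
  rewrite ?muln0 ?exp1n //.
have -> : (\prod_(q <- qs | q != 0) (r * q)`! =
           \prod_(q <- qs | q != 0) (gamma_comp_coef r q * (r`! * q`! ^ r)))%N.
  by apply: eq_bigr => -[|q] // _; rewrite /gamma_comp_coef divnK // fact_mul_dvd.
rewrite big_split big_split /= big_const_seq iter_muln_1 /gamma_prod_coef.
case: (count _ _) qs_nz => [|k] // _.
rewrite expnS [r`! * _]mulnC -mulnA mulnA mulnK; first exact: mulnC.
by rewrite muln_gt0 fact_gt0 prodn_gt0 // => q; rewrite expn_gt0 fact_gt0.
Qed.

Lemma s7coefE r qs : size qs = size r ->
  (forall i, i < size r -> has (fun q => q != 0) (nth [::] qs i)) ->
  s7coef r qs = \prod_(i <- iota 0 (size r)) gamma_prod_coef (nth 0 r i) (nth [::] qs i).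
Proof.
move=> sz_qs qs_nz; rewrite /s7coef (zip_nth_iota 0 [::] (esym sz_qs)) big_map.
by apply: eq_big_seq => i; rewrite mem_iota => /andP[_ i_lt]; rewrite gamma_prod_coefE ?qs_nz.
Qed.

Local Open Scope ring_scope.

Section StepAlgebraOfDividedPowers.
Variables (F : fieldType) (A : lmodType F) (mul : A -> A -> A).
Hypothesis mulP : comm_assoc_alg mul.

Lemma amulA : associative mul.
Proof. by case: mulP => mulA _ _ _ a b c; rewrite mulA. Qed.

Lemma amulC : commutative mul.
Proof. by case: mulP. Qed.

Lemma amulDl : left_distributive mul +%R.
Proof. by case: mulP. Qed.

Lemma amulZl l a b : mul (l *: a) b = l *: mul a b.
Proof. by case: mulP. Qed.

Lemma amulMnl n a b : mul (a *+ n) b = mul a b *+ n.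
Proof. by rewrite -!scaler_nat amulZl. Qed.

Lemma amulMnr n a b : mul a (b *+ n) = mul a b *+ n.
Proof. by rewrite amulC amulMnl amulC. Qed.

Lemma foldl_mulZ s l a : foldl mul (l *: a) s = l *: foldl mul a s.
Proof. by elim: s a => //= b s IHs a; rewrite amulZl IHs. Qed.

Lemma foldl_mulD s a b : foldl mul (a + b) s = foldl mul a s + foldl mul b s.
Proof. by elim: s a b => //= c s IHs a b; rewrite amulDl IHs. Qed.

Lemma foldl_mulMn s n a : foldl mul (a *+ n) s = foldl mul a s *+ n.
Proof. by rewrite -!scaler_nat foldl_mulZ. Qed.

Lemma foldl_mul_sum s (I : Type) (t : seq I) (P : pred I) (f : I -> A) :
  foldl mul (\sum_(i <- t | P i) f i) s = \sum_(i <- t | P i) foldl mul (f i) s.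
Proof.
apply: (big_morph (foldl mul ^~ s)); first exact: foldl_mulD.
by rewrite -(scale0r (0 : A)) foldl_mulZ !scale0r.
Qed.

(* Products in the possibly non-unital algebra A are taken in the commutative monoid
   option A, with None as the empty product. *)
Local Notation oprod := (oAC amulA amulC).

Lemma big_oprod_eqNone (I : Type) (t : seq I) (P : pred I) (f : I -> A) :
  (\big[oprod/None]_(i <- t | P i) Some (f i) == None) = ~~ has P t.
Proof.
elim: t => [|i t IHt]; first by rewrite big_nil.
by rewrite big_cons /=; case: (P i) => //=; case: (\big[_/_]_(_ <- _ | _) _).
Qed.

Lemma big_oprod_Some (I : Type) (t : seq I) (P : pred I) (f : I -> A) : has P t ->
  Some (odflt 0 (\big[oprod/None]_(i <- t | P i) Some (f i))) =
  \big[oprod/None]_(i <- t | P i) Some (f i).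
Proof. by rewrite -[has _ _]negbK -(big_oprod_eqNone _ _ f); case: (\big[_/_]_(_ <- _ | _) _). Qed.

Lemma big_oprod_Mn (I : Type) (t : seq I) (P : pred I) (f : I -> A) (c : I -> nat) :
  \big[oprod/None]_(i <- t | P i) Some (f i *+ c i) =
  omap (fun a => a *+ \prod_(i <- t | P i) c i) (\big[oprod/None]_(i <- t | P i) Some (f i)).
Proof.
elim: t => [|i t IHt]; first by rewrite !big_nil.
rewrite !big_cons; case: (P i) => //; rewrite IHt.
case big_t: (\big[oprod/None]_(j <- t | P j) Some (f j)) => [a|] /=.
  by rewrite oACE amulMnl amulMnr -mulrnA mulnC.
move/eqP: big_t; rewrite big_oprod_eqNone => t_nP.
by rewrite big_hasC ?muln1.
Qed.

Lemma nprodE s : nprod mul s = odflt 0 (\big[oprod/None]_(a <- s) Some a).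
Proof.
case: s => [|a s]; first by rewrite big_nil.
rewrite big_cons; elim: s a => [|b s IHs] a; first by rewrite big_nil.
by rewrite big_cons Monoid.mulmA -IHs.
Qed.

Variable gam : nat -> A -> A.

Definition phi_opt (s : seq (nat * A)) : option A :=
  \big[oprod/None]_(pr <- s | pr.1 != 0%N) Some (gam pr.1 pr.2).

Lemma phi_gammaE r xs : phi_gamma mul gam r xs = odflt 0 (phi_opt (zip r xs)).
Proof. by rewrite /phi_gamma nprodE big_map big_filter. Qed.

Hypothesis gamP : divided_power_alg mul gam.

Lemma gammaZ n l a : (0 < n)%N -> gam n (l *: a) = l ^+ n *: gam n a.
Proof. by case: gamP => gamZ _ _ _ _; apply: gamZ. Qed.

Lemma gamma_mul_gamma m n a : (0 < m)%N -> (0 < n)%N ->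
  mul (gam m a) (gam n a) = gam (m + n) a *+ 'C(m + n, m).
Proof. by case: gamP => _ gamMgam _ _ _; apply: gamMgam. Qed.

Lemma gammaD n a b : (0 < n)%N ->
  gam n (a + b) = gam n a + \sum_(1 <= l < n) mul (gam l a) (gam (n - l) b) + gam n b.
Proof. by case: gamP => _ _ gamD _ _; apply: gamD. Qed.

Lemma gamma1 a : gam 1 a = a.
Proof. by case: gamP. Qed.

Lemma gammaM n a b : (0 < n)%N -> gam n (mul a b) = mul (gam n a) (gam n b) *+ n`!.
Proof. by case: gamP => _ _ _ _ [gamM _] n_gt0; case: (gamM n a b n_gt0). Qed.

Lemma gamma_comp m n a : (0 < m)%N -> (0 < n)%N ->
  gam m (gam n a) = gam (m * n) a *+ gamma_comp_coef m n.
Proof. by case: gamP => _ _ _ _ [_ gam_comp]; apply: gam_comp. Qed.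

Lemma phi_gamma_perm r s xs : size xs = size r -> perm_eq s (iota 0 (size r)) ->
  phi_gamma mul gam [seq nth 0%N r i | i <- s] [seq nth 0 xs i | i <- s] =
  phi_gamma mul gam r xs.
Proof.
move=> sz_xs perm_s; rewrite !phi_gammaE zip_map (zip_nth_iota 0%N 0 (esym sz_xs)).
by rewrite /phi_opt !big_map; congr odflt; apply: perm_big.
Qed.

Lemma phi_gammaZ r1 r l a xs :
  phi_gamma mul gam (r1 :: r) (l *: a :: xs) = l ^+ r1 *: phi_gamma mul gam (r1 :: r) (a :: xs).
Proof.
case: r1 => [|r1]; rewrite /phi_gamma /=; first by rewrite expr0 scale1r.
by rewrite gammaZ // foldl_mulZ.
Qed.

Lemma phi_gamma_dup l m r a xs :
  phi_gamma mul gam ((l + m)%N :: r) (a :: xs) *+ 'C(l + m, l) =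
  phi_gamma mul gam (l :: m :: r) (a :: a :: xs).
Proof.
case: l m => [|l] [|m]; rewrite /phi_gamma /= ?bin0 ?addn0 ?binn ?mulr1n //.
by rewrite -foldl_mulMn gamma_mul_gamma.
Qed.

Lemma phi_gammaD r1 r a b xs :
  phi_gamma mul gam (r1 :: r) (a + b :: xs) =
  \sum_(l < r1.+1) phi_gamma mul gam (val l :: (r1 - l)%N :: r) (a :: b :: xs).
Proof.
case: r1 => [|r1]; first by rewrite big_ord1 /phi_gamma.
rewrite -(big_mkord xpredT (fun l => phi_gamma mul gam (l :: (r1.+1 - l)%N :: r) (a :: b :: xs))).
rewrite big_nat_recr // big_nat_recl // subn0 subnn /=.
rewrite {1}/phi_gamma /= gammaD // !foldl_mulD foldl_mul_sum big_add1 /=.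
rewrite [RHS]addrC [X in _ = _ + X]addrC addrA; congr (_ + _ + _).
apply: eq_big_nat => i /andP[_ i_lt]; rewrite /phi_gamma subSS /=.
by rewrite subn_eq0 leqNgt i_lt.
Qed.

Lemma phi_gamma1 a : phi_gamma mul gam [:: 1%N] [:: a] = a.
Proof. by rewrite /phi_gamma /= gamma1. Qed.

Lemma phi_opt_scale r s : (0 < r)%N ->
  phi_opt [seq ((r * pr.1)%N, pr.2) | pr <- s] =
  \big[oprod/None]_(pr <- s | pr.1 != 0%N) Some (gam (r * pr.1) pr.2).
Proof.
move=> r_gt0; rewrite /phi_opt big_map; apply: eq_bigl => pr /=.
by rewrite muln_eq0 negb_or -lt0n r_gt0.
Qed.

Lemma gamma_phi_opt r s : (0 < r)%N -> has (fun pr => pr.1 != 0%N) s ->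
  gam r (odflt 0 (phi_opt s)) =
  odflt 0 (phi_opt [seq ((r * pr.1)%N, pr.2) | pr <- s]) *+ gamma_prod_coef r (unzip1 s).
Proof.
move=> r_gt0; rewrite phi_opt_scale // /phi_opt /gamma_prod_coef.
elim: s => [|[q a] s IHs] //=; rewrite !big_cons /=.
case: q => [/IHs //|q _].
have [has_s'|no_s] := boolP (has (fun pr : nat * A => pr.1 != 0%N) s); last first.
  have no_q : ~~ has (fun q => q != 0%N) (unzip1 s) by rewrite /unzip1 has_map.
  move: (no_q); rewrite has_count -eqn0Ngt => /eqP ->.
  by rewrite !big_hasC //= gamma_comp // expn0 mul1n muln1.
rewrite -(big_oprod_Some (fun pr => gam pr.1 pr.2) has_s')
  -(big_oprod_Some (fun pr => gam (r * pr.1) pr.2) has_s') !oACE /= gammaM // gamma_comp // IHs //.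
rewrite amulMnl amulMnr -!mulrnA; congr (_ *+ _).
have : has (fun q => q != 0%N) (unzip1 s) by rewrite /unzip1 has_map.
by rewrite has_count; case: (count _ _) => [|k] // _; rewrite add0n expnS; ring.
Qed.

Definition phi_opt_blocks r qs xss : option A :=
  \big[oprod/None]_(i <- iota 0 (size r))
    phi_opt [seq ((nth 0%N r i * pr.1)%N, pr.2) | pr <- zip (nth [::] qs i) (nth [::] xss i)].

Lemma phi_gamma_diamond r qs xss : size qs = size r -> size xss = size r ->
  (forall i, (i < size r)%N -> size (nth [::] xss i) = size (nth [::] qs i)) ->
  phi_gamma mul gam (map size (diamond r qs)) (flatten xss) = odflt 0 (phi_opt_blocks r qs xss).
Proof.
move=> sz_qs sz_xss sz_blocks.
have -> : flatten xss = flatten [seq nth [::] xss i | i <- iota 0 (size r)].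
  by rewrite -sz_xss -{1}(mkseq_nth [::] xss).
rewrite size_diamond // phi_gammaE zip_flatten; last first.
  rewrite -!map_comp; apply/eq_in_map => i; rewrite mem_iota => /andP[_ i_lt] /=.
  by rewrite size_map sz_blocks.
rewrite zip_map /phi_opt_blocks /phi_opt big_flatten big_map; congr odflt.
by rewrite big_map; apply: eq_bigr => i _; rewrite /= zip_mapl big_map.
Qed.

Lemma phi_gamma_phi_gamma r qs xss : size qs = size r -> size xss = size r ->
  (forall i, (i < size r)%N -> has (fun q => q != 0%N) (nth [::] qs i)) ->
  (forall i, (i < size r)%N -> size (nth [::] xss i) = size (nth [::] qs i)) ->
  phi_gamma mul gam r
    [seq phi_gamma mul gam (nth [::] qs i) (nth [::] xss i) | i <- iota 0 (size r)] =
  odflt 0 (phi_opt_blocks r qs xss) *+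
    \prod_(i <- iota 0 (size r)) gamma_prod_coef (nth 0%N r i) (nth [::] qs i).
Proof.
move=> sz_qs sz_xss qs_nz sz_blocks.
have has_blocks i : (i < size r)%N ->
    has (fun pr => pr.1 != 0%N) (zip (nth [::] qs i) (nth [::] xss i)).
  by move=> i_lt; rewrite (has_zip1 (fun q => q != 0%N)) ?sz_blocks ?qs_nz.
rewrite phi_gammaE -{1}(mkseq_nth 0%N r) zip_map /phi_opt big_map /=.
rewrite big_seq_cond (eq_bigr (fun i => Some (odflt 0 (phi_opt
    [seq ((nth 0%N r i * pr.1)%N, pr.2) | pr <- zip (nth [::] qs i) (nth [::] xss i)])
      *+ gamma_prod_coef (nth 0%N r i) (nth [::] qs i)))); last first.
  move=> i /andP[]; rewrite mem_iota => /andP[_ i_lt] r_i.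
  by rewrite phi_gammaE gamma_phi_opt ?lt0n ?has_blocks // unzip1_zip ?sz_blocks.
rewrite -big_seq_cond big_oprod_Mn -(big_rmcond _ _ (P := fun i => nth 0%N r i != 0%N));
  last by move=> i /negPn/eqP ->; rewrite gamma_prod_coef0.
have -> : \big[oprod/None]_(i <- iota 0 (size r) | nth 0%N r i != 0%N) Some (odflt 0 (phi_opt
    [seq ((nth 0%N r i * pr.1)%N, pr.2) | pr <- zip (nth [::] qs i) (nth [::] xss i)]))
    = phi_opt_blocks r qs xss.
  rewrite /phi_opt_blocks big_mkcond; apply: eq_big_seq => i.
  rewrite mem_iota => /andP[_ i_lt]; have [->|r_i] := eqVneq (nth 0%N r i) 0%N.
    by rewrite /phi_opt big_map big_pred0.
  by rewrite /= phi_opt_scale ?lt0n // big_oprod_Some ?has_blocks.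
by case: (phi_opt_blocks r qs xss) => [a|] /=; rewrite ?mul0rn.
Qed.

Lemma phi_gamma_comp r qs xss : size qs = size r -> size xss = size r ->
  (forall i, (i < size r)%N -> has (fun q => q != 0%N) (nth [::] qs i)) ->
  (forall i, (i < size r)%N -> size (nth [::] xss i) = size (nth [::] qs i)) ->
  phi_gamma mul gam r
    [seq phi_gamma mul gam (nth [::] qs i) (nth [::] xss i) | i <- iota 0 (size r)] =
  phi_gamma mul gam (map size (diamond r qs)) (flatten xss) *+ s7coef r qs.
Proof.
move=> sz_qs sz_xss qs_nz sz_blocks.
by rewrite phi_gamma_phi_gamma // phi_gamma_diamond // s7coefE.
Qed.

End StepAlgebraOfDividedPowers.

Theorem proposition6p2 (F : fieldType) (A : lmodType F)
  (mul : A -> A -> A) (gam : nat -> A -> A) :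
  comm_assoc_alg mul -> divided_power_alg mul gam ->
  step_algebra (fun (h r : seq nat) (xs : seq A) => phi_gamma mul gam r xs).
Proof.
move=> mulP gamP; split.
- by move=> r h s xs _; apply: phi_gamma_perm.
- by [].
- by move=> r1 r h l a xs _ _; apply: phi_gammaZ.
- by move=> r1 r l m h a xs <- _ _; apply: phi_gamma_dup.
split; first by move=> r1 r h a b xs _ _; apply: phi_gammaD.
split; first exact: phi_gamma1.
move=> r h qs gs xss _ sz_qs _ sz_xss blocks; cbv zeta.
by apply: phi_gamma_comp => // i /blocks [] // /C_has_nonzero.
Qed.
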